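(* Let $N\ge1$, let $T$ be the rooted binary tree and $T_N$ the grafted binary tree. For every automorphism $g\in Aut(T)$ there exists an automorphism $\widehat g\in Aut(T_N)$ such that the homeomorphism of $\partial T$ induced by $g$ and the homeomorphism of $\partial T_N$ induced by $\widehat g$ are topologically conjugate.
   Context: The rooted binary tree $T$ has levels $V_i$, $|V_i|=2^i$, vertices labelled by words in $\{0,1\}^i$, with $w_1\cdots w_i$ joined to $w_1\cdots w_i0$ and $w_1\cdots w_i1$; $\partial T=\{0,1\}^{\mathbb N}$. The grafted binary tree $T_N$ has levels $V_0$ (the root), $V_1$ with $2^N$ vertices labelled $0,\ldots,2^N-1$ all joined to the root, and for $i\ge1$ each vertex $w_1\cdots w_i$ of $V_i$ joined to the two vertices $w_1\cdots w_i0$, $w_1\cdots w_i1$ of $V_{i+1}$; $\partial T_N=\{0,\ldots,2^N-1\}\times\prod_{i\ge2}\{0,1\}$ with the product topology. An automorphism of a tree is a bijection of vertices preserving adjacency (hence levels); it induces a homeomorphism of the boundary. *)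

From HB Require Import structures.
From mathcomp Require Import all_boot all_order all_algebra.
From mathcomp Require Import boolp classical_sets topology cantor.
Set Implicit Arguments. Unset Strict Implicit. Unset Printing Implicit Defensive.

Definition VT := seq bool.

Definition adjT (u v : VT) : Prop :=
  exists b : bool, v = rcons u b \/ u = rcons v b.

Definition is_autT (g : VT -> VT) : Prop :=
  bijective g /\ forall u v, adjT u v <-> adjT (g u) (g v).

Definition bdT := cantor_space.

Definition rayT (xi : bdT) (n : nat) : VT := mkseq xi n.

Definition induced_T (g : VT -> VT) (xi : bdT) : bdT :=
  fun n => nth false (g (rayT xi n.+1)) n.

(* ---------- the grafted binary tree T_N ----------
   vertices: None = the root; Some (a, w) = the vertex  a w_2 ... w_i  of
   level i = 1 + size w, where a : 'I_(2^N) is the level-1 label and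
   w = [:: w_2; ...; w_i] is a word over {0,1}. *)
Definition VTN (N : nat) := option ('I_(2 ^ N) * seq bool)%type.

Definition adjTN (N : nat) (u v : VTN N) : Prop :=
  match u, v with
  | None, Some (_, w) => w = [::]
  | Some (_, w), None => w = [::]
  | Some (a, w), Some (a', w') =>
      a = a' /\ exists b : bool, w' = rcons w b \/ w = rcons w' b
  | None, None => False
  end.

Definition is_autTN (N : nat) (g : VTN N -> VTN N) : Prop :=
  bijective g /\ forall u v, adjTN u v <-> adjTN (g u) (g v).

(* boundary dT_N = {0,...,2^N-1} x prod_{i>=2} {0,1}, product topology
   (discrete topology on the first factor); the second component xi.2 is
   indexed from 0, i.e. xi.2 k is the letter at level k+2. *)
Definition bdTN (N : nat) := (discrete_topology 'I_(2 ^ N) * cantor_space)%type.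

Definition rayTN (N : nat) (xi : bdTN N) (n : nat) : VTN N :=
  match n with
  | 0 => None
  | k.+1 => Some (xi.1, mkseq xi.2 k)
  end.

Definition induced_TN (N : nat) (g : VTN N -> VTN N) (xi : bdTN N) : bdTN N :=
  (match g (rayTN xi 1) with Some (a, _) => a | None => xi.1 end,
   fun k => match g (rayTN xi k.+2) with
            | Some (_, w) => nth false w k
            | None => false
            end).

Definition homeomorphism (X Y : topologicalType) (h : X -> Y) : Prop :=
  exists k : Y -> X,
    [/\ cancel h k, cancel k h, continuous h & continuous k].

Definition top_conjugate (X Y : topologicalType) (f : X -> X) (f' : Y -> Y)
  : Prop :=
  exists h : X -> Y, homeomorphism h /\ h \o f = f' \o h.

From mathcomp Require Import all_boot all_order all_algebra.
From mathcomp Require Import boolp classical_sets topology cantor.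

(* An automorphism of T fixes the root, hence preserves levels and prefixes.
   Labelling the 2^N vertices of level 1 of T_N by the words u_a of length N,
   the vertex (a, w) of T_N becomes the vertex u_a ++ w of T: T_N is T with
   levels 1, ..., N - 1 deleted, so g restricts to an automorphism of T_N.
   On the boundary the same identification, cutting a ray after its first N
   letters, is a homeomorphism, and it conjugates the two actions because
   both are computed ray by ray. *)

Lemma cantor_coord_continuous n : continuous (fun xi : cantor_space => xi n).
Proof. exact: (@proj_continuous nat (fun _ => bool)). Qed.

Lemma continuous_into_cantor {X : topologicalType} (f : X -> cantor_space) :
  (forall n, continuous (fun x => f x n)) -> continuous f.
Proof. by move=> fn_cont x; apply/pointwise_cvgP => n; exact: fn_cont. Qed.

Lemma cantor_near_prefix (xi : cantor_space) n :
  \forall eta \near xi, forall i, (i < n)%N -> eta i = xi i.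
Proof.
elim: n => [|n IHn]; first by near=> eta.
have near_n : \forall eta \near xi, eta n = xi n.
  exact: cantor_coord_continuous n xi _ (discrete_set1 (xi n)).
near=> eta => i; rewrite ltnS leq_eqVlt => /predU1P[->|]; first by near: eta.
by move: i; near: eta.
Unshelve. all: end_near.
Qed.

Lemma discrete_continuous {D : choiceType} {Y : topologicalType}
    (f : discrete_topology D -> Y) :
  continuous f.
Proof.
move=> x; apply: (near_cst_continuous (f x)).
by apply: (filterS _ (discrete_set1 x)) => y ->.
Qed.

Lemma continuous_fst_comp {X Y Z : topologicalType} (h : X -> Z) :
  continuous h -> continuous (fun q : X * Y => h q.1).
Proof.
move=> h_cont [x y].
exact: cvg_comp (@cvg_fst _ _ (nbhs x) (nbhs y) _) (h_cont x).
Qed.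

Lemma continuous_snd_comp {X Y Z : topologicalType} (h : Y -> Z) :
  continuous h -> continuous (fun q : X * Y => h q.2).
Proof.
move=> h_cont [x y].
exact: cvg_comp (@cvg_snd _ _ (nbhs x) (nbhs y) _) (h_cont y).
Qed.

Set Implicit Arguments.
Unset Strict Implicit.
Unset Printing Implicit Defensive.

Lemma mkseq_addn (T : Type) (f : nat -> T) m n :
  mkseq f (m + n) = mkseq f m ++ mkseq (fun k => f (m + k)) n.
Proof.
by rewrite /mkseq iotaD map_cat add0n -[in iota m _](addn0 m) iotaDl -map_comp.
Qed.

Lemma take_mkseq (T : Type) (f : nat -> T) m n :
  (m <= n)%N -> take m (mkseq f n) = mkseq f m.
Proof.
by move=> le_mn; rewrite -(subnKC le_mn) mkseq_addn take_size_cat ?size_mkseq.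
Qed.

Lemma adjT_nil u : adjT u [::] -> exists b, u = [:: b].
Proof.
case=> b [|->]; last by exists b.
by case: u => [|x []].
Qed.

Lemma autT_inv g :
  is_autT g -> exists g', [/\ is_autT g', cancel g g' & cancel g' g].
Proof.
case=> [[g' gK g'K] adj_g]; exists g'; split => //; split; first by exists g.
by move=> u v; have := adj_g (g' u) (g' v); rewrite !g'K; exact: iff_sym.
Qed.

(* Every vertex but the root has three neighbours, and g^-1 would map those of
   a non-root g [::] injectively into the two neighbours of the root. *)
Lemma autT_nil g : is_autT g -> g [::] = [::].
Proof.
move=> autg; have [g' [[_ adj_g'] gK g'K]] := autT_inv autg.
case/lastP E: (g [::]) => [//|p c].
have level1 v : adjT v (g [::]) -> exists b, g' v = [:: b].
  by move=> /(adj_g' v); rewrite gK; exact: adjT_nil.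
set u0 := rcons (rcons p c) false; set u1 := rcons (rcons p c) true.
have [b Ep] : exists b, g' p = [:: b].
  by apply: level1; rewrite E; exists c; left.
have [b0 E0] : exists b, g' u0 = [:: b].
  by apply: level1; rewrite E; exists false; right.
have [b1 E1] : exists b, g' u1 = [:: b].
  by apply: level1; rewrite E; exists true; right.
have g'_inj := can_inj g'K.
have neq_p b' : p <> rcons (rcons p c) b'.
  by move/(congr1 size)/eqP; rewrite !size_rcons ltn_eqF ?leqnSn.
have neq_u : u0 <> u1 by move/(congr1 (last true)); rewrite !last_rcons.
have : [|| b == b0, b == b1 | b0 == b1] by case: b b0 b1 {Ep E0 E1} => [] [] [].
case/or3P=> /eqP eq_b; exfalso.
- by apply: (neq_p false); apply: g'_inj; rewrite Ep E0 eq_b.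
- by apply: (neq_p true); apply: g'_inj; rewrite Ep E1 eq_b.
- by apply: neq_u; apply: g'_inj; rewrite E0 E1 eq_b.
Qed.

Section AutT.
Variable g : VT -> VT.
Hypothesis autg : is_autT g.

Lemma autT_rcons u b : exists c, g (rcons u b) = rcons (g u) c.
Proof.
have g_inj : injective g by case: autg => [[g' gK _] _]; exact: can_inj gK.
have adj_child v a : adjT (g v) (g (rcons v a)).
  by apply/(autg.2 v (rcons v a)); exists a; left.
elim/last_ind: u b => [|u b' IHu] b.
  have [c [->|]] := adj_child [::] b; first by exists c.
  by rewrite (autT_nil autg); case: (g _).
have [c [->|E]] := adj_child (rcons u b') b; first by exists c.
exfalso; have [c' E'] := IHu b'; rewrite E' in E.
have [/g_inj/(congr1 size)/eqP + _] := rcons_inj E.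
by rewrite !size_rcons ltn_eqF ?leqnSn.
Qed.

Lemma autT_size u : size (g u) = size u.
Proof.
elim/last_ind: u => [|u b IHu]; first by rewrite (autT_nil autg).
by have [c ->] := autT_rcons u b; rewrite !size_rcons IHu.
Qed.

Lemma autT_take k u : g (take k u) = take k (g u).
Proof.
elim/last_ind: u => [|u b IHu]; first by rewrite (autT_nil autg).
have [c Ec] := autT_rcons u b; rewrite Ec -!cats1 !take_cat autT_size.
case: ltnP => // le_u_k; case: (k - size u) => [|m] /=; first by rewrite !cats0.
by rewrite !cats1 Ec.
Qed.

Lemma rayT_induced xi n : rayT (induced_T g xi) n = g (rayT xi n).
Proof.
apply: (@eq_from_nth _ false); first by rewrite autT_size !size_mkseq.
move=> i; rewrite size_mkseq => lt_in; rewrite nth_mkseq // /induced_T.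
by rewrite /rayT -(take_mkseq _ lt_in) autT_take nth_take.
Qed.

End AutT.

Lemma card_bool_tuple N : #|{: N.-tuple bool}| = 2 ^ N.
Proof. by rewrite card_tuple card_bool. Qed.

Section Graft.
Variable N : nat.

Definition word_of_label (a : 'I_(2 ^ N)) : seq bool :=
  val (enum_val (cast_ord (esym (card_bool_tuple N)) a)).

Definition label_of_word (u : seq bool) : 'I_(2 ^ N) :=
  cast_ord (card_bool_tuple N) (enum_rank (insubd (nseq_tuple N false) u)).

Lemma size_word_of_label a : size (word_of_label a) = N.
Proof. exact: size_tuple. Qed.

Lemma word_of_labelK : cancel word_of_label label_of_word.
Proof.
by move=> a; rewrite /label_of_word /word_of_label valKd enum_valK cast_ordKV.
Qed.

Lemma label_of_wordK u : size u = N -> word_of_label (label_of_word u) = u.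
Proof.
move=> size_u; rewrite /label_of_word /word_of_label cast_ordK enum_rankK.
by rewrite val_insubd size_u eqxx.
Qed.

Definition to_T (p : 'I_(2 ^ N) * seq bool) : VT := word_of_label p.1 ++ p.2.

Definition of_T (u : VT) : 'I_(2 ^ N) * seq bool :=
  (label_of_word (take N u), drop N u).

Lemma size_to_T p : size (to_T p) = N + size p.2.
Proof. by rewrite size_cat size_word_of_label. Qed.

Lemma to_TK : cancel to_T of_T.
Proof.
case=> a w; rewrite /to_T /of_T /=.
by rewrite take_size_cat ?drop_size_cat ?size_word_of_label ?word_of_labelK.
Qed.

Lemma of_TK u : (N <= size u)%N -> to_T (of_T u) = u.
Proof.
by move=> le_N_u; rewrite /to_T label_of_wordK ?cat_take_drop // size_takel.
Qed.

Lemma adjTN_to_T p q : adjTN (Some p) (Some q) <-> adjT (to_T p) (to_T q).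
Proof.
case: p q => [a w] [a' w']; rewrite /to_T /=; split.
  by case=> <- [b [->|->]]; exists b; [left | right]; rewrite rcons_cat.
have word_inj := can_inj word_of_labelK.
case=> b [] E; rewrite rcons_cat in E;
  move: (congr1 (take N) E) (congr1 (drop N) E);
  rewrite !take_size_cat ?drop_size_cat ?size_word_of_label // => /word_inj.
- by move=> -> ->; split; last by exists b; left.
- by move=> -> ->; split; last by exists b; right.
Qed.

Definition graft_aut (g : VT -> VT) : VTN N -> VTN N :=
  omap (fun p => of_T (g (to_T p))).

Lemma to_T_graft g p : is_autT g -> to_T (of_T (g (to_T p))) = g (to_T p).
Proof. by move=> autg; rewrite of_TK // autT_size // size_to_T leq_addr. Qed.

Lemma graft_aut_is_aut g : is_autT g -> is_autTN (graft_aut g).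
Proof.
move=> autg; have [g' [autg' gK g'K]] := autT_inv autg; split.
  by exists (graft_aut g') => -[p|] //=; congr Some;
    rewrite to_T_graft // ?(gK, g'K) to_TK.
have level1_graft p : p.2 = [::] <-> (of_T (g (to_T p))).2 = [::].
  by rewrite !(rwP nilP) /nilp size_drop autT_size // size_to_T addKn.
move=> [p|] [q|] //.
- by rewrite !adjTN_to_T !to_T_graft //; exact: autg.2.
- by move: (level1_graft p) => /=; case: (of_T _); case: p.
- by move: (level1_graft q) => /=; case: (of_T _); case: q.
Qed.

Definition split_ray (xi : bdT) : bdTN N :=
  (label_of_word (mkseq xi N), fun k => xi (N + k)).

Definition join_ray (eta : bdTN N) : bdT :=
  fun n => if (n < N)%N then nth false (word_of_label eta.1) n
            else eta.2 (n - N).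

Lemma split_rayK : cancel split_ray join_ray.
Proof.
move=> xi; apply: funext => n; rewrite /join_ray /=.
case: ltnP => [lt_nN | /subnKC -> //].
by rewrite label_of_wordK ?size_mkseq // nth_mkseq.
Qed.

Lemma join_rayK : cancel join_ray split_ray.
Proof.
case=> a zeta; rewrite /split_ray /join_ray /=; congr pair.
  rewrite -[X in _ = X](word_of_labelK a); congr label_of_word.
  apply: (@eq_from_nth _ false); rewrite size_mkseq ?size_word_of_label //.
  by move=> i lt_iN; rewrite nth_mkseq ?lt_iN.
by apply: funext => k; rewrite ltnNge leq_addr addKn.
Qed.

Lemma split_ray_continuous : continuous split_ray.
Proof.
move=> xi.
have label_cont : {for xi, continuous (fun eta : bdT =>
    label_of_word (mkseq eta N) : discrete_topology 'I_(2 ^ N))}.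
  apply: (near_cst_continuous
    (label_of_word (mkseq xi N) : discrete_topology _)).
  apply: filterS (cantor_near_prefix xi N) => eta eq_eta_xi.
  congr label_of_word; apply/eq_in_map => i.
  by rewrite mem_iota => /andP[_ /eq_eta_xi].
have shift_cont :
    continuous (fun eta : bdT => (fun k => eta (N + k)) : cantor_space).
  by apply: continuous_into_cantor => k; exact: cantor_coord_continuous.
exact: cvg_pair label_cont (shift_cont xi).
Qed.

Lemma join_ray_continuous : continuous join_ray.
Proof.
apply: continuous_into_cantor => n; rewrite /join_ray; case: ltnP => _.
  exact: continuous_fst_comp
    (fun a : discrete_topology 'I_(2 ^ N) => nth false (word_of_label a) n)
    (discrete_continuous _).
exact: continuous_snd_comp (fun zeta : cantor_space => zeta (n - N))
  (cantor_coord_continuous _).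
Qed.

Lemma split_ray_homeomorphism : homeomorphism split_ray.
Proof.
exists join_ray; split; [exact: split_rayK | exact: join_rayK |
  exact: split_ray_continuous | exact: join_ray_continuous].
Qed.

Lemma rayTN_split_ray xi n :
  rayTN (split_ray xi) n.+1 = Some (of_T (rayT xi (N + n))).
Proof.
by rewrite /rayT mkseq_addn /of_T take_size_cat ?drop_size_cat ?size_mkseq.
Qed.

Lemma graft_aut_rayTN g xi n : is_autT g ->
  graft_aut g (rayTN (split_ray xi) n.+1)
  = rayTN (split_ray (induced_T g xi)) n.+1.
Proof.
move=> autg; rewrite !rayTN_split_ray /= of_TK ?rayT_induced //.
by rewrite size_mkseq leq_addr.
Qed.

End Graft.

Lemma induced_TN_rayTN N (f : VTN N -> VTN N) (eta eta' : bdTN N) :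
  (forall n, f (rayTN eta n.+1) = rayTN eta' n.+1) -> induced_TN f eta = eta'.
Proof.
case: eta' => a zeta f_ray; rewrite /induced_TN f_ray; congr pair.
by apply: funext => k; rewrite f_ray /= nth_mkseq.
Qed.

Theorem lemma2p5 (N : nat) (hN : (1 <= N)%N) (g : VT -> VT) :
  is_autT g ->
  exists gh : VTN N -> VTN N,
    is_autTN gh /\
    top_conjugate (X := bdT) (Y := bdTN N) (induced_T g) (induced_TN gh).
Proof.
move=> autg; exists (@graft_aut N g); split; first exact: graft_aut_is_aut.
exists (@split_ray N); split; first exact: split_ray_homeomorphism.
apply: funext => xi /=; symmetry; apply: induced_TN_rayTN => n.
exact: graft_aut_rayTN.
Qed.
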